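(* For every instance with nonnegative-value players (and any number of teams), there exists an allocation that is both EF1 and Pareto optimal.
   Context: Setting: teams $T=[n]$, players $P=\{p_1,\dots,p_m\}$. Each player $p$ has a complete, transitive weak preference $\succsim_p$ over $T$. Each team $i$ has an additive valuation $v_i:2^P\to\mathbb{R}$, $v_i(S)=\sum_{p\in S}v_i(p)$; nonnegative-value players means $v_i(p)\ge0$ for all $i,p$. An allocation is an ordered partition $(A_1,\dots,A_n)$ of $P$. $A$ is EF1 if for all distinct $i,j$ there are $X\subseteq A_i$, $Y\subseteq A_j$ with $|X\cup Y|\le1$ and $v_i(A_i\setminus X)\ge v_i(A_j\setminus Y)$. A team is better (worse) off in $A'$ than in $A$ if $v_i(A'_i)>v_i(A_i)$ (resp. $<$); a player is better (worse) off if she strictly prefers (strictly disprefers) her team in $A'$ to her team in $A$. $A$ is Pareto dominated by $A'$ if no party (team or player) is worse off and at least one party is better off; $A$ is Pareto optimal (PO) if not Pareto dominated by any allocation. *)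

From mathcomp Require Import all_boot all_order all_algebra.
Set Implicit Arguments. Unset Strict Implicit. Unset Printing Implicit Defensive.
Import Order.TTheory GRing.Theory Num.Theory.
Local Open Scope ring_scope.

(* Teams are 'I_n, players are the elements of a finite type P.
   An allocation (ordered partition of P into n parts) is a map P -> 'I_n;
   part i is  bundle A i = [set p | A p == i]. *)
Definition allocation (n : nat) (P : finType) := P -> 'I_n.

Definition bundle n (P : finType) (A : allocation n P) (i : 'I_n) : {set P} :=
  [set p | A p == i].

Definition val_set (R : numDomainType) n (P : finType)
  (v : 'I_n -> P -> R) (i : 'I_n) (S : {set P}) : R :=
  \sum_(p in S) v i p.

Definition weak_order n (r : rel 'I_n) : Prop :=
  (forall i j, r i j || r j i) /\ (forall i j k, r i j -> r j k -> r i k).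

Definition EF1 (R : numDomainType) n (P : finType)
  (v : 'I_n -> P -> R) (A : allocation n P) : Prop :=
  forall i j : 'I_n, i != j ->
    exists (X Y : {set P}),
      [/\ X \subset bundle A i, Y \subset bundle A j, (#|X :|: Y| <= 1)%N
        & val_set v i (bundle A j :\: Y) <= val_set v i (bundle A i :\: X)].

(* pref p i j  means  i \succsim_p j *)
Definition strict_pref n (r : rel 'I_n) (i j : 'I_n) : bool := r i j && ~~ r j i.

Definition pareto_dominates (R : numDomainType) n (P : finType)
  (v : 'I_n -> P -> R) (pref : P -> rel 'I_n) (A A' : allocation n P) : Prop :=
  (forall i, val_set v i (bundle A i) <= val_set v i (bundle A' i)) /\
  (forall p, ~~ strict_pref (pref p) (A p) (A' p)) /\
  ((exists i, val_set v i (bundle A i) < val_set v i (bundle A' i)) \/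
   (exists p, strict_pref (pref p) (A' p) (A p))).

Definition pareto_optimal (R : numDomainType) n (P : finType)
  (v : 'I_n -> P -> R) (pref : P -> rel 'I_n) (A : allocation n P) : Prop :=
  ~ exists A' : allocation n P, pareto_dominates v pref A A'.

(* Choose an allocation maximising, lexicographically, the number of teams
   of positive value, then the product of these values (maximum Nash
   welfare), and then the sum over the players of the rank of their team.
   A Pareto improvement never lowers a team's value; if it raised one it
   would raise the Nash welfare, so it fixes all team values and strictly
   helps some player without hurting any, which raises the rank sum.
   For EF1: if team i still envies team j after removing the player g of
   j minimising v_j(g) / v_i(g) among those with v_i(g) > 0, then moving g
   from j to i strictly increases the Nash welfare. *)

From mathcomp Require Import all_boot all_order all_algebra.
From mathcomp Require Import lra.
From Stdlib Require Import FunctionalExtensionality.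
Set Implicit Arguments. Unset Strict Implicit. Unset Printing Implicit Defensive.
Import Order.TTheory GRing.Theory Num.Theory.
Local Open Scope ring_scope.

Lemma exists_fun_max d (O : orderType d) (T S : finType) (F : (T -> S) -> O) (s0 : S) :
  exists f, forall g, (F g <= F f)%O.
Proof.
have [f _ f_max] := @arg_maxP _ _ {ffun T -> S} [ffun=> s0] predT (fun f => F f) isT.
exists f => g; suff -> : g = (fun x => [ffun x => g x] x) by exact: f_max.
by apply: functional_extensionality => x; rewrite ffunE.
Qed.

Section MinRatio.
Variables (R : realFieldType) (T : finType) (S : {set T}) (a b : T -> R).
Hypotheses (a_ge0 : forall x, 0 <= a x) (b_ge0 : forall x, 0 <= b x).

Lemma exists_min_ratio x0 : x0 \in S -> 0 < a x0 ->
  exists2 g, g \in S &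
    0 < a g /\ b g * \sum_(h in S) a h <= a g * \sum_(h in S) b h.
Proof.
move=> x0S ax0_gt0.
have x0P : (x0 \in S) && (0 < a x0) by rewrite x0S ax0_gt0.
have [g /andP[gS ag_gt0] g_min] :=
  @arg_minP _ R T x0 [pred x | (x \in S) && (0 < a x)] (fun x => b x / a x) x0P.
exists g => //; split => //; rewrite !mulr_sumr; apply: ler_sum => h hS.
have [ah0|ah_neq0] := eqVneq (a h) 0; first by rewrite ah0 mulr0 mulr_ge0.
have ah_gt0 : 0 < a h by rewrite lt_def ah_neq0 a_ge0.
have := g_min h; rewrite /= hS ah_gt0 => /(_ isT).
by rewrite ler_pdivrMr // mulrAC ler_pdivlMr // [a g * _]mulrC.
Qed.

End MinRatio.

Lemma transfer_raises_product (R : realFieldType) (ui uj V a b : R) :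
  0 < uj -> 0 < a -> 0 <= b -> b * V <= a * uj -> ui + a < V ->
  ui * uj < (ui + a) * (uj - b).
Proof.
move=> uj_gt0 a_gt0 b_ge0 bV_le envy.
have [b0|b_neq0] := eqVneq b 0; first by rewrite b0 subr0 ltr_pM2r // ltrDl.
have : b * (ui + a) < b * V by rewrite ltr_pM2l // lt_def b_neq0.
nra.
Qed.

Section NashWelfare.
Variables (R : realFieldType) (n : nat).
Implicit Types u w : 'I_n -> R.

Definition positives u : {set 'I_n} := [set k | 0 < u k].

Definition nash_welfare u : nat *l R := (#|positives u|, \prod_(k in positives u) u k).

Lemma nash_welfare_lt u w :
  positives u \subset positives w ->
  (positives u = positives w ->
     \prod_(k in positives u) u k < \prod_(k in positives u) w k) ->
  (nash_welfare u < nash_welfare w)%O.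
Proof.
move=> sub_uw prod_lt; have le_card := subset_leqif_cards sub_uw.
rewrite /nash_welfare ltxi_pair !leEnat le_card.1 /=.
have [eq_uw|neq_uw] := eqVneq (positives u) (positives w).
  by rewrite -eq_uw (prod_lt eq_uw) implybT.
by rewrite leqNgt (ltn_leqif le_card) neq_uw.
Qed.

Lemma nash_welfare_lt_transfer u w i j : i != j ->
  (forall k, k != i -> k != j -> u k = w k) ->
  0 <= u i -> 0 <= u j -> 0 < w i -> 0 <= w j ->
  (0 < u j /\ u i * u j < w i * w j) \/ [/\ u j = 0, w j = 0 & u i < w i] ->
  (nash_welfare u < nash_welfare w)%O.
Proof.
move=> ij u_eq ui_ge0 uj_ge0 wi_gt0 wj_ge0 gain.
have wj_gt0 : 0 < u j -> 0 < w j.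
  move=> uj_gt0; case: gain => [[_ lt_prod]|[uj0]]; last by rewrite uj0 ltxx in uj_gt0.
  rewrite lt_def wj_ge0 andbT; apply: contraTneq lt_prod => ->.
  by rewrite mulr0 -leNgt mulr_ge0.
apply: nash_welfare_lt.
  apply/subsetP => k; rewrite !inE.
  have [->|ki] := eqVneq k i; first by rewrite wi_gt0.
  have [->|kj] := eqVneq k j; first exact: wj_gt0.
  by rewrite u_eq.
move=> same; have : i \in positives w by rewrite inE.
rewrite -same inE => ui_gt0.
rewrite (bigD1 i) ?inE // [X in _ < X](bigD1 i) ?inE //=.
case: gain => [[uj_gt0 lt_prod]|[uj0 _ lt_i]].
  have jS : (j \in positives u) && (j != i) by rewrite inE uj_gt0 eq_sym.
  rewrite !(bigD1 j jS) /= !mulrA [X in _ < _ * X](eq_bigr u).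
  - by rewrite ltr_pM2r // prodr_gt0 // => k; rewrite inE => /andP[/andP[]].
  - by move=> k /andP[/andP[_ ki] kj]; rewrite u_eq.
rewrite [X in _ < _ * X](eq_bigr u).
- by rewrite ltr_pM2r // prodr_gt0 // => k; rewrite inE => /andP[].
- move=> k /andP[k_pos ki]; rewrite u_eq //.
  by apply: contraTneq k_pos => ->; rewrite inE uj0 ltxx.
Qed.

Lemma nash_welfare_lt_le u w k :
  (forall l, 0 <= u l <= w l) -> u k < w k -> (nash_welfare u < nash_welfare w)%O.
Proof.
move=> le_uw lt_k; apply: nash_welfare_lt.
  apply/subsetP => l; rewrite !inE => ul_gt0.
  by have /andP[_ le_l] := le_uw l; exact: lt_le_trans le_l.
move=> same; have : k \in positives w.
  by have /andP[uk_ge0 _] := le_uw k; rewrite inE (le_lt_trans uk_ge0 lt_k).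
rewrite -same inE => uk_gt0.
rewrite (bigD1 k) ?inE // [X in _ < X](bigD1 k) ?inE //=.
apply: (@lt_le_trans _ _ (w k * \prod_(l in positives u | l != k) u l)).
  by rewrite ltr_pM2r // prodr_gt0 // => l; rewrite inE => /andP[].
rewrite ler_wpM2l ?(ltW (lt_trans uk_gt0 lt_k)) // ler_prod // => l _; exact: le_uw.
Qed.

End NashWelfare.

Section Ranks.
Variables (n : nat) (r : rel 'I_n).
Hypothesis r_weak : weak_order r.

Definition pref_rank (a : 'I_n) : nat := #|[set k | r a k]|.

Lemma pref_rank_le a b : ~~ strict_pref r a b -> (pref_rank a <= pref_rank b)%N.
Proof.
case: r_weak => r_total r_trans not_ab.
have rba : r b a.
  apply: contraNT not_ab => not_rba.
  by rewrite /strict_pref not_rba andbT; move: (r_total a b); rewrite (negbTE not_rba) orbF.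
by apply: subset_leq_card; apply/subsetP => k; rewrite !inE; apply: r_trans.
Qed.

Lemma pref_rank_lt a b : strict_pref r b a -> (pref_rank a < pref_rank b)%N.
Proof.
case: r_weak => r_total r_trans /andP[rba not_rab].
apply: proper_card; apply/properP; split.
  by apply/subsetP => k; rewrite !inE; apply: r_trans.
by exists b; rewrite !inE // -[r b b]orbb r_total.
Qed.

End Ranks.

Section Allocations.
Variables (R : realFieldType) (n : nat) (P : finType).
Variables (pref : P -> rel 'I_n) (v : 'I_n -> P -> R).
Hypotheses (v_ge0 : forall i p, 0 <= v i p) (pref_weak : forall p, weak_order (pref p)).
Implicit Types A B : allocation n P.

Definition utility A (i : 'I_n) : R := val_set v i (bundle A i).

Definition rank_sum A : nat := \sum_p pref_rank (pref p) (A p).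

Definition lex_score A : (nat *l R) *l nat := (nash_welfare (utility A), rank_sum A).

Definition reassign A (g : P) (i : 'I_n) : allocation n P :=
  fun p => if p == g then i else A p.

Lemma val_set_ge0 i S : 0 <= val_set v i S.
Proof. exact: sumr_ge0. Qed.

Lemma utility_ge0 A i : 0 <= utility A i.
Proof. exact: val_set_ge0. Qed.

Lemma bundle_reassign A g i k : A g != i ->
  bundle (reassign A g i) k =
    if k == i then g |: bundle A k else if k == A g then bundle A k :\ g else bundle A k.
Proof.
move=> gi; apply/setP => p; rewrite /bundle /reassign.
have [->|ki] := eqVneq k i; first by rewrite !inE; case: (eqVneq p g) => [->|]; rewrite ?eqxx.
have [->|kg] := eqVneq k (A g); rewrite !inE; case: (eqVneq p g) => [->|] //=.
- by rewrite eq_sym (negbTE gi).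
- by rewrite eq_sym (negbTE ki) eq_sym (negbTE kg).
Qed.

Lemma utility_reassign A g i : A g != i ->
  [/\ utility (reassign A g i) i = utility A i + v i g,
      utility (reassign A g i) (A g) = utility A (A g) - v (A g) g &
      forall k, k != i -> k != A g -> utility (reassign A g i) k = utility A k].
Proof.
move=> gi; have gAg : g \in bundle A (A g) by rewrite /bundle inE.
rewrite /utility /val_set; split.
- rewrite bundle_reassign // eqxx big_setU1 1?addrC //.
  by rewrite /bundle inE.
- rewrite (bundle_reassign (A g) gi) ifN // eqxx.
  by rewrite [in RHS](big_setD1 g gAg) /= addrAC subrr add0r.
- by move=> k ki kg; rewrite bundle_reassign // (negbTE ki) (negbTE kg).
Qed.

Lemma EF1_of_nash_max A :
  (forall B, ~ (nash_welfare (utility A) < nash_welfare (utility B))%O) -> EF1 v A.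
Proof.
move=> A_max i j ij; set u := utility A.
set V := val_set v i (bundle A j).
have [no_envy|envy] := leP V (u i).
  by exists set0, set0; rewrite !sub0set setU0 cards0 !setD0.
have [h0 /andP[h0j vh0_gt0]] : exists h, (h \in bundle A j) && (0 < v i h).
  apply: psumr_neq0P => [h _|V0]; first exact: v_ge0.
  by move: envy; rewrite /V /val_set V0 ltNge utility_ge0.
have [g gj [vig_gt0 cross]] := exists_min_ratio (v_ge0 i) (v_ge0 j) h0j vh0_gt0.
have Agj : A g = j by move: gj; rewrite inE => /eqP.
have V_split : V = val_set v i (bundle A j :\ g) + v i g.
  by rewrite /V /val_set (big_setD1 g gj) addrC.
have [no_envy|envy_g] := leP (val_set v i (bundle A j :\ g)) (u i).
  by exists set0, [set g]; rewrite sub0set sub1set gj set0U cards1 setD0.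
exfalso; apply: (A_max (reassign A g i)).
have gi : A g != i by rewrite Agj eq_sym.
have [wi wj wk] := utility_reassign gi; rewrite Agj -/u in wj wk; rewrite -/u in wi.
apply: (nash_welfare_lt_transfer ij (fun k ki kj => esym (wk k ki kj)));
  rewrite ?utility_ge0 //.
  by rewrite wi ltr_wpDl ?utility_ge0.
rewrite wi; have [uj0|uj_neq0] := eqVneq (u j) 0.
  right; split; rewrite ?ltrDl //.
  by apply/eqP; rewrite eq_le utility_ge0 wj uj0 sub0r oppr_le0 v_ge0.
left; have uj_gt0 : 0 < u j by rewrite lt_def uj_neq0 utility_ge0.
rewrite wj; split => //; apply: (transfer_raises_product (V := V)) => //.
by rewrite V_split ltrD2r.
Qed.

Lemma rank_sum_lt A B q :
  (forall p, ~~ strict_pref (pref p) (A p) (B p)) ->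
  strict_pref (pref q) (B q) (A q) -> (rank_sum A < rank_sum B)%N.
Proof.
move=> no_worse q_better; rewrite /rank_sum (bigD1 q) // [X in (_ < X)%N](bigD1 q) //=.
rewrite -addSn leq_add ?pref_rank_lt //.
by apply: leq_sum => p _; apply: pref_rank_le.
Qed.

Lemma pareto_optimal_of_lex_max A :
  (forall B, (lex_score B <= lex_score A)%O) -> pareto_optimal v pref A.
Proof.
move=> A_max [B [teams_ok [players_ok some_better]]].
have := A_max B; rewrite leNgt => /negP; apply.
have [/existsP[k team_better]|no_team_better] := boolP [exists k, utility A k < utility B k].
  have lt_nash : (nash_welfare (utility A) < nash_welfare (utility B))%O.
    by apply: (nash_welfare_lt_le (k := k)) => // l; rewrite utility_ge0 teams_ok.
  by rewrite ltxi_pair (ltW lt_nash) lt_geF.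
have same_utility : utility A = utility B.
  apply: functional_extensionality => k; apply/eqP; rewrite eq_le teams_ok /=.
  by rewrite leNgt; apply: contra no_team_better => lt_k; apply/existsP; exists k.
case: some_better => [[k team_better]|[q q_better]].
  by move: no_team_better => /existsP[]; exists k.
by rewrite ltxi_pair same_utility lexx ltEnat /= (rank_sum_lt players_ok q_better).
Qed.

End Allocations.

Theorem theorem5 (R : realFieldType) (n : nat) (P : finType)
  (pref : P -> rel 'I_n) (v : 'I_n -> P -> R) :
  (0 < n)%N ->
  (forall p, weak_order (pref p)) ->
  (forall i p, 0 <= v i p) ->
  exists A : allocation n P, EF1 v A /\ pareto_optimal v pref A.
Proof.
move=> n_gt0 pref_weak v_ge0.
have [A A_max] := exists_fun_max (lex_score pref v) (Ordinal n_gt0).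
exists A; split; last exact: pareto_optimal_of_lex_max.
apply: EF1_of_nash_max => // B lt_nash.
by have := A_max B; rewrite leNgt ltxi_pair (ltW lt_nash) lt_geF.
Qed.
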